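(* Let $r^\star_0\in(r^\star_{3M},\pi/2)$. There exists $C=C(M,k,r^\star_0)>0$ such that for all sufficiently large $\ell$, $$\int_{r^\star_{3M}}^{r^\star_0}\big((R_{\mathrm{QM},\ell}')^2+\ell(\ell+1)R_{\mathrm{QM},\ell}^2\big)\,dr^\star\le Ce^{-C^{-1}\ell}\int_{r^\star_{3M}}^{\pi/2}\big((R_{\mathrm{QM},\ell}')^2+\ell(\ell+1)R_{\mathrm{QM},\ell}^2\big)\,dr^\star.$$
   Context: Fix $M>0$, $k>0$; $\Delta(r)=r^2+k^2r^4-2Mr$, $w:=\Delta/r^4$, viewed as a function of $r^\star$ defined by $dr^\star/dr=r^2/\Delta$, $r^\star(r=+\infty)=\pi/2$; $r^\star_{3M}=r^\star(r=3M)$; prime is $d/dr^\star$. For $\ell\ge2$, $\omega_\ell^2$ is the lowest eigenvalue and $R_{\mathrm{QM},\ell}$ a corresponding real eigenfunction (equivalently a minimiser of the quotient below) of the problem $\omega^2R=-R''+w(\ell(\ell+1)-\frac{6M}{r})R$ on $[r^\star_{3M},\pi/2]$, $R(r^\star_{3M})=0$, $(-2\omega^2R+\frac{\ell(\ell+1)(\ell(\ell+1)-2)}{6M}R'+k^2\ell(\ell+1)R)(\pi/2)=0$, where $$\omega_\ell^2=\inf_{R\in H^1_0((r^\star_{3M},\pi/2])\setminus\{0\}}\frac{\int_{r^\star_{3M}}^{\pi/2}\big((R')^2+w(\ell(\ell+1)-\frac{6M}{r})R^2\big)dr^\star+\frac{6Mk^2}{\ell(\ell+1)-2}R(\frac\pi2)^2}{\int_{r^\star_{3M}}^{\pi/2}R^2\,dr^\star+\frac{12M}{\ell(\ell+1)(\ell(\ell+1)-2)}R(\frac\pi2)^2},$$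 $H^1_0((r^\star_{3M},\pi/2])$ being the $H^1$-closure of smooth functions compactly supported in $(r^\star_{3M},\pi/2]$. *)

From Stdlib Require Import Reals.
From Coquelicot Require Import Coquelicot.
Open Scope R_scope.

Definition Delta (M k r : R) : R := r ^ 2 + k ^ 2 * r ^ 4 - 2 * M * r.

(* tortoise coordinate: dr*/dr = r^2/Delta, r*(+oo) = pi/2, i.e.
   r*(r) = pi/2 - \int_r^{+oo} s^2/Delta(s) ds   (for r >= 3M > r_+) *)
Definition rstar (M k r : R) : R :=
  PI / 2 - RInt_gen (fun s => s ^ 2 / Delta M k s) (at_point r) (Rbar_locally p_infty).

Definition rstar3M (M k : R) : R := rstar M k (3 * M).

Definition r_of (M k x : R) : R := iota (fun r => 3 * M <= r /\ rstar M k r = x).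

Definition w (M k x : R) : R := Delta M k (r_of M k x) / (r_of M k x) ^ 4.

Definition Lam (l : nat) : R := INR l * (INR l + 1).

Definition Vpot (M k : R) (l : nat) (x : R) : R :=
  w M k x * (Lam l - 6 * M / r_of M k x).

Definition num_Q (M k : R) (l : nat) (f : R -> R) : R :=
  RInt (fun x => (Derive f x) ^ 2 + Vpot M k l x * (f x) ^ 2) (rstar3M M k) (PI / 2)
  + 6 * M * k ^ 2 / (Lam l - 2) * (f (PI / 2)) ^ 2.

Definition den_Q (M k : R) (l : nat) (f : R -> R) : R :=
  RInt (fun x => (f x) ^ 2) (rstar3M M k) (PI / 2)
  + 12 * M / (Lam l * (Lam l - 2)) * (f (PI / 2)) ^ 2.

Definition quotQ (M k : R) (l : nat) (f : R -> R) : R := num_Q M k l f / den_Q M k l f.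

(* admissible trial functions: C^1 on [r*_{3M}, pi/2], vanishing at r*_{3M},
   not identically zero (dense in H^1_0((r*_{3M}, pi/2]) \ {0}) *)
Definition admissible (M k : R) (f : R -> R) : Prop :=
  (forall x, rstar3M M k <= x <= PI / 2 -> ex_derive f x /\ continuous (Derive f) x)
  /\ f (rstar3M M k) = 0
  /\ (exists x, rstar3M M k <= x <= PI / 2 /\ f x <> 0).

(* R_{QM,l}: a (real) minimiser of the quotient, whose minimum value is omega_l^2 *)
Definition is_QM_minimiser (M k : R) (l : nat) (f : R -> R) : Prop :=
  admissible M k f /\ (forall g, admissible M k g -> quotQ M k l f <= quotQ M k l g).

Definition energy (l : nat) (f : R -> R) (x : R) : R :=
  (Derive f x) ^ 2 + Lam l * (f x) ^ 2.

From Pilot Require Import Defs.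
From Stdlib Require Import Reals Lra Psatz.
From Coquelicot Require Import Coquelicot.
Open Scope R_scope.

(* In the variable u = 1/r the tortoise coordinate is x = PI/2 - G(u) with G' = 1/w(u),
   where w(u) = k^2 + u^2 - 2Mu^3 increases on [0, 1/(3M)], and the potential is
   w(u)(l(l+1) - 6Mu).  A trial function supported near PI/2 gives
   omega_l^2 <= l(l+1) w(p) + O(1), so on [r*_3M, x1], where w exceeds w(p), the potential
   exceeds omega_l^2 + 2mu^2 + c l(l+1) for some mu of order l.  Testing the Euler-Lagrange
   equation against (E - 1) R, with the Agmon weight E(x) = exp(2mu(PI/2 - x)), turns
   int E (R'^2 - 2mu R R' + (V - omega^2) R^2) into int (R'^2 + (V - omega^2) R^2), which is
   O(1) times the energy.  The first integrand is at least c E times the energy density on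
   [r*_3M, x1] and at least -O(l(l+1)) E(x1) R^2 beyond x1, whence the factor
   E(x1) / E(r0) = exp(-2mu(x1 - r0)). *)

Lemma lipschitz_continuous (f : R -> R) (K : R) :
  (forall x y, Rabs (f x - f y) <= K * Rabs (x - y)) -> forall x, continuous f x.
Proof.
  intros Hf x. apply (filterlim_locally f (f x)). intros eps.
  assert (HK : 0 < Rabs K + 1) by (pose proof (Rabs_pos K); lra).
  assert (Hd : 0 < eps / (Rabs K + 1)) by (apply Rdiv_lt_0_compat; [apply cond_pos | lra]).
  exists (mkposreal _ Hd). intros y Hy.
  change (Rabs (y - x) < eps / (Rabs K + 1)) in Hy. change (Rabs (f y - f x) < eps).
  assert (K * Rabs (y - x) <= (Rabs K + 1) * Rabs (y - x)).
  { apply Rmult_le_compat_r; [apply Rabs_pos | pose proof (Rle_abs K); lra]. }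
  assert ((Rabs K + 1) * Rabs (y - x) < eps).
  { apply (Rmult_lt_compat_l (Rabs K + 1)) in Hy; [|lra].
    replace ((Rabs K + 1) * (eps / (Rabs K + 1))) with (pos eps) in Hy by (field; lra). lra. }
  specialize (Hf y x). lra.
Qed.

(* [ring] on an equation whose carrier is a Coquelicot structure convertible to [R]. *)
Ltac R_ring := match goal with |- ?x = ?y => change (@eq R x y) end; ring.

Lemma exp_le_compat x y : x <= y -> exp x <= exp y.
Proof. intros [H | ->]; [left; now apply exp_increasing | now right]. Qed.

Lemma continuous_Rplus (f g : R -> R) x :
  continuous f x -> continuous g x -> continuous (fun y => f y + g y) x.
Proof. apply (continuous_plus (V := R_NormedModule)). Qed.

Lemma continuous_Rmult (f g : R -> R) x :
  continuous f x -> continuous g x -> continuous (fun y => f y * g y) x.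
Proof. apply (continuous_mult (K := R_AbsRing)). Qed.

Lemma continuous_Rminus (f g : R -> R) x :
  continuous f x -> continuous g x -> continuous (fun y => f y - g y) x.
Proof.
  intros Hf Hg. apply (continuous_Rplus f (fun y => - g y)); [exact Hf|].
  apply (continuous_opp (V := R_NormedModule)), Hg.
Qed.

Lemma continuous_Rsqr (f : R -> R) x : continuous f x -> continuous (fun y => f y ^ 2) x.
Proof.
  intros Hf. apply (continuous_ext (fun y => f y * f y)); [intros; simpl; ring|].
  now apply continuous_Rmult.
Qed.

Ltac solve_continuous :=
  repeat match goal with
  | H : forall x, continuous ?f x |- continuous ?f _ => apply H
  | |- continuous (fun _ => _ + _) _ => apply continuous_Rplus
  | |- continuous (fun _ => _ - _) _ => apply continuous_Rminus
  | |- continuous (fun _ => _ ^ 2) _ => apply continuous_Rsqr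
  | |- continuous (fun _ => _ * _) _ => apply continuous_Rmult
  | |- continuous (fun _ => _) _ => apply continuous_const
  end.

Lemma RInt_ext_R (f g : R -> R) a b :
  (forall x, Rmin a b < x < Rmax a b -> f x = g x) -> RInt f a b = RInt g a b.
Proof. apply RInt_ext. Qed.

Lemma RInt_const_R (c a b : R) : RInt (fun _ => c) a b = (b - a) * c.
Proof. rewrite RInt_const. reflexivity. Qed.

Lemma ex_RInt_cont (f : R -> R) a b : (forall x, continuous f x) -> ex_RInt f a b.
Proof. intros Hf. apply (ex_RInt_continuous (V := R_CompleteNormedModule)); auto. Qed.

Lemma is_derive_RInt_cont (f : R -> R) a :
  (forall x, continuous f x) -> forall x, is_derive (fun y => RInt f a y) x (f x).
Proof.
  intros Hf x. apply (is_derive_RInt f _ a); [|apply Hf].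
  apply filter_forall. intros y. apply (RInt_correct (V := R_CompleteNormedModule)).
  now apply ex_RInt_cont.
Qed.

Lemma RInt_lincomb (A B : R -> R) p q a b :
  (forall x, continuous A x) -> (forall x, continuous B x) ->
  RInt (fun x => p * A x + q * B x) a b = p * RInt A a b + q * RInt B a b :> R.
Proof.
  intros HA HB.
  assert (eA := ex_RInt_cont A a b HA). assert (eB := ex_RInt_cont B a b HB).
  rewrite (RInt_plus (fun x => p * A x) (fun x => q * B x));
    [| now apply (ex_RInt_scal A) | now apply (ex_RInt_scal B)].
  now rewrite (RInt_scal A), (RInt_scal B).
Qed.

Lemma RInt_le_cont (f g : R -> R) a b :
  a <= b -> (forall x, continuous f x) -> (forall x, continuous g x) ->
  (forall x, a < x < b -> f x <= g x) -> RInt f a b <= RInt g a b.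
Proof. intros. apply RInt_le; auto; now apply ex_RInt_cont. Qed.

Lemma RInt_ge_scal_cont (f g : R -> R) c a b :
  a <= b -> (forall x, continuous f x) -> (forall x, continuous g x) ->
  (forall x, a < x < b -> c * g x <= f x) -> c * RInt g a b <= RInt f a b.
Proof.
  intros Hab Hf Hg Hfg. rewrite <- (Rplus_0_r (c * _)), <- (Rmult_0_l (RInt f a b)).
  rewrite <- RInt_lincomb by auto.
  apply RInt_le_cont; auto. intros; solve_continuous.
  intros x Hx. specialize (Hfg x Hx). lra.
Qed.

Lemma RInt_le_scal_cont (f g : R -> R) c a b :
  a <= b -> (forall x, continuous f x) -> (forall x, continuous g x) ->
  (forall x, a < x < b -> f x <= c * g x) -> RInt f a b <= c * RInt g a b.
Proof.
  intros Hab Hf Hg Hfg. rewrite <- (Rplus_0_r (c * _)), <- (Rmult_0_l (RInt f a b)).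
  rewrite <- RInt_lincomb by auto.
  apply RInt_le_cont; auto. intros; solve_continuous.
  intros x Hx. specialize (Hfg x Hx). lra.
Qed.

Lemma RInt_ge_0_cont (f : R -> R) a b :
  a <= b -> (forall x, continuous f x) -> (forall x, a < x < b -> 0 <= f x) -> 0 <= RInt f a b.
Proof. intros. apply RInt_ge_0; auto. now apply ex_RInt_cont. Qed.

Lemma RInt_Chasles_cont (f : R -> R) a b c :
  (forall x, continuous f x) -> RInt f a c = RInt f a b + RInt f b c.
Proof. intros Hf. symmetry. apply (RInt_Chasles f); now apply ex_RInt_cont. Qed.

Lemma RInt_gt_0_at (f : R -> R) a b x0 :
  (forall x, continuous f x) -> a < b -> a <= x0 <= b -> 0 < f x0 ->
  (forall x, a < x < b -> 0 <= f x) -> 0 < RInt f a b.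
Proof.
  intros Hc Hab Hx0 Hf0 Hpos.
  assert (He : 0 < f x0 / 2) by lra.
  destruct (proj1 (filterlim_locally f (f x0)) (Hc x0) (mkposreal _ He)) as [d Hd].
  assert (Hnear : forall y, Rabs (y - x0) < d -> 0 < f y).
  { intros y Hy. specialize (Hd y Hy). change (Rabs (f y - f x0) < f x0 / 2) in Hd.
    apply Rabs_lt_between in Hd. lra. }
  assert (dpos := cond_pos d).
  set (p := Rmax a (x0 - d / 2)). set (q := Rmin b (x0 + d / 2)).
  assert (Hp : a <= p /\ x0 - d / 2 <= p /\ p <= x0)
    by (unfold p; repeat split; [apply Rmax_l | apply Rmax_r | apply Rmax_lub; lra]).
  assert (Hq : q <= b /\ q <= x0 + d / 2 /\ x0 <= q)
    by (unfold q; repeat split; [apply Rmin_l | apply Rmin_r | apply Rmin_glb; lra]).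
  assert (Hpq : p < q)
    by (unfold p, q, Rmax, Rmin; destruct Rle_dec; destruct Rle_dec; lra).
  rewrite (RInt_Chasles_cont f a p b), (RInt_Chasles_cont f p q b) by auto.
  assert (0 <= RInt f a p) by (apply RInt_ge_0_cont; [lra | exact Hc | intros; apply Hpos; lra]).
  assert (0 <= RInt f q b) by (apply RInt_ge_0_cont; [lra | exact Hc | intros; apply Hpos; lra]).
  assert (0 < RInt f p q).
  { apply RInt_gt_0; auto. intros x Hx. apply Hnear, Rabs_def1; lra. }
  lra.
Qed.

Lemma RInt_sqr_gt_0 (f : R -> R) a b x0 :
  (forall x, continuous f x) -> a < b -> a <= x0 <= b -> f x0 <> 0 ->
  0 < RInt (fun x => f x ^ 2) a b.
Proof.
  intros Hf Hab Hx0 Hfx0. apply (RInt_gt_0_at _ _ _ x0); auto.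
  - intros; solve_continuous.
  - now apply pow2_gt_0.
  - intros; apply pow2_ge_0.
Qed.

Lemma RInt_lincomb3 (P Q S : R -> R) s t a b :
  (forall x, continuous P x) -> (forall x, continuous Q x) -> (forall x, continuous S x) ->
  RInt (fun x => P x + s * Q x + t * S x) a b
  = RInt P a b + s * RInt Q a b + t * RInt S a b :> R.
Proof.
  intros HP HQ HS.
  rewrite (RInt_ext_R _ (fun x => 1 * (1 * P x + s * Q x) + t * S x)) by (intros; ring).
  rewrite 2!RInt_lincomb by (intros; solve_continuous). ring.
Qed.

Lemma linear_coef_0_of_nonneg (B C T : R) :
  0 < T -> (forall t, 0 < Rabs t < T -> 0 <= t * B + t ^ 2 * C) -> B = 0.
Proof.
  intros HT H.
  (* For [B > 0] the choice [t = -s] with [s] small makes [t * B] dominate [t ^ 2 * C]. *)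
  assert (Hpos : forall B', 0 < B' -> (forall s, 0 < s < T -> 0 <= - s * B' + s ^ 2 * C) -> False).
  { intros B' HB' H'.
    assert (HC := Rabs_pos C). assert (HCle := Rle_abs C).
    set (s := Rmin (T / 2) (B' / (2 * (Rabs C + 1)))).
    assert (Hs1 : s <= T / 2) by apply Rmin_l.
    assert (Hs2 : s * (2 * (Rabs C + 1)) <= B').
    { assert (s <= B' / (2 * (Rabs C + 1))) by apply Rmin_r.
      apply (Rmult_le_compat_r (2 * (Rabs C + 1))) in H0; [|lra].
      replace (B' / (2 * (Rabs C + 1)) * (2 * (Rabs C + 1))) with B' in H0 by (field; lra).
      exact H0. }
    assert (Hs0 : 0 < s) by (apply Rmin_glb_lt; [lra | apply Rdiv_lt_0_compat; lra]).
    specialize (H' s ltac:(lra)).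
    assert (s ^ 2 * C <= s * (s * Rabs C)) by (simpl; nra). nra. }
  destruct (Rtotal_order B 0) as [HB | [HB | HB]]; [exfalso | exact HB | exfalso].
  - apply (Hpos (- B)); [lra|]. intros s Hs.
    replace (- s * - B + s ^ 2 * C) with (s * B + s ^ 2 * C) by ring.
    apply H. rewrite Rabs_right; lra.
  - apply (Hpos B HB). intros s Hs.
    replace (- s * B + s ^ 2 * C) with ((- s) * B + (- s) ^ 2 * C) by ring.
    apply H. rewrite Rabs_left; lra.
Qed.

Lemma add_small_neq_0 (y z t : R) : Rabs t < Rabs y / (Rabs z + 1) -> y + t * z <> 0.
Proof.
  intros Ht E. pose proof (Rabs_pos z). pose proof (Rabs_pos t).
  apply (Rmult_lt_compat_r (Rabs z + 1)) in Ht; [|lra].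
  replace (Rabs y / (Rabs z + 1) * (Rabs z + 1)) with (Rabs y) in Ht by (field; lra).
  replace y with (- (t * z)) in Ht by lra. rewrite Rabs_Ropp, Rabs_mult in Ht. nra.
Qed.

Definition clamp (a b x : R) : R := Rmax a (Rmin x b).

Lemma clamp_lipschitz a b x y : a <= b -> Rabs (clamp a b x - clamp a b y) <= Rabs (x - y).
Proof.
  intros Hab. unfold clamp, Rmax, Rmin.
  unfold Rabs; repeat destruct Rcase_abs; repeat destruct Rle_dec; lra.
Qed.

Lemma clamp_id a b x : a <= x <= b -> clamp a b x = x.
Proof. intros. unfold clamp, Rmax, Rmin. repeat destruct Rle_dec; lra. Qed.

Lemma clamp_in a b x : a <= b -> a <= clamp a b x <= b.
Proof. intros. unfold clamp, Rmax, Rmin. repeat destruct Rle_dec; lra. Qed.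

Lemma continuous_clamp a b x : a <= b -> continuous (clamp a b) x.
Proof.
  intros Hab. apply (lipschitz_continuous _ 1). intros.
  rewrite Rmult_1_l. now apply clamp_lipschitz.
Qed.

Definition C1 (f : R -> R) : Prop := forall x, ex_derive f x /\ continuous (Derive f) x.

Lemma C1_continuous (f : R -> R) x : C1 f -> continuous f x.
Proof. intros Hf. apply (ex_derive_continuous (V := R_NormedModule)), Hf. Qed.

Lemma is_derive_plus_scal (f h : R -> R) t x df dh :
  is_derive f x df -> is_derive h x dh -> is_derive (fun y => f y + t * h y) x (df + t * dh).
Proof.
  intros Hf Hh. apply (is_derive_plus f (fun y => t * h y)); [exact Hf|].
  now apply is_derive_scal.
Qed.

Lemma C1_of_is_derive (f df : R -> R) :
  (forall x, is_derive f x (df x)) -> (forall x, continuous df x) -> C1 f.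
Proof.
  intros Hf Hdf x. split; [now exists (df x)|].
  apply (continuous_ext df); [|apply Hdf]. intros y. symmetry. now apply is_derive_unique.
Qed.

Lemma C1_extension (f : R -> R) a b : a <= b ->
  (forall x, a <= x <= b -> ex_derive f x /\ continuous (Derive f) x) ->
  exists g, C1 g /\ forall x, a <= x <= b -> g x = f x /\ Derive g x = Derive f x.
Proof.
  intros Hab Hf.
  set (D := fun x => Derive f (clamp a b x)).
  assert (HD : forall x, continuous D x).
  { intros x. apply (continuous_comp (clamp a b) (Derive f)); [now apply continuous_clamp|].
    apply Hf, clamp_in, Hab. }
  assert (Hg : forall x, is_derive (fun y => f a + RInt D a y) x (D x)).
  { intros x. assert (H := is_derive_plus (fun _ => f a) (fun y => RInt D a y) x 0 (D x)
      (is_derive_const (f a) x) (is_derive_RInt_cont D a HD x)).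
    unfold plus in H; simpl in H. now rewrite Rplus_0_l in H. }
  exists (fun y => f a + RInt D a y). split; [now apply (C1_of_is_derive _ D)|].
  intros x Hx. split.
  - rewrite (RInt_ext_R D (Derive f)), RInt_Derive; [ring | | |];
      rewrite ?Rmin_left, ?Rmax_right by lra.
    + intros y Hy. apply Hf; lra.
    + intros y Hy. apply Hf; lra.
    + intros y Hy. unfold D. rewrite clamp_id; lra.
  - transitivity (D x); [now apply is_derive_unique|].
    unfold D. now rewrite clamp_id.
Qed.

(** * The tortoise coordinate in the variable u = 1/r *)

Section Tortoise.

Variables M k : R.
Hypothesis HM : 0 < M.
Hypothesis Hk : 0 < k.

Definition u_3M : R := / (3 * M).

(* [Delta M k r / r ^ 4] written in the variable [u = 1 / r]. *)
Definition w_u (u : R) : R := k ^ 2 + u ^ 2 - 2 * M * u ^ 3.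

Definition w_max : R := k ^ 2 + u_3M ^ 2.

Lemma u_3M_pos : 0 < u_3M.
Proof. apply Rinv_0_lt_compat. lra. Qed.

Lemma u_3M_spec : 3 * M * u_3M = 1.
Proof. unfold u_3M. field. lra. Qed.

Lemma k2_pos : 0 < k ^ 2.
Proof. now apply pow_lt. Qed.

Lemma w_max_pos : 0 < w_max.
Proof. unfold w_max. pose proof k2_pos. pose proof (pow2_ge_0 u_3M). lra. Qed.

Lemma Delta_w_u r : 0 < r -> Defs.Delta M k r = w_u (/ r) * r ^ 4.
Proof. intros. unfold w_u, Defs.Delta. field. lra. Qed.

Lemma w_u_bounds u : 0 <= u <= u_3M -> k ^ 2 <= w_u u <= w_max.
Proof.
  intros Hu. pose proof u_3M_spec. unfold w_u, w_max.
  assert (M * u <= M * u_3M) by (apply Rmult_le_compat_l; lra).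
  assert (u ^ 2 <= u_3M ^ 2) by (apply pow_incr; lra).
  assert (0 <= (1 / 3 - M * u) * u ^ 2) by (apply Rmult_le_pos; [lra | apply pow2_ge_0]).
  assert (0 <= M * u * u ^ 2) by (apply Rmult_le_pos; [nra | apply pow2_ge_0]).
  split; nra.
Qed.

Lemma w_u_pos u : 0 <= u <= u_3M -> 0 < w_u u.
Proof. intros Hu. pose proof (w_u_bounds u Hu). pose proof k2_pos. lra. Qed.

Lemma w_u_lt u1 u2 : 0 <= u1 -> u1 < u2 -> u2 <= u_3M -> w_u u1 < w_u u2.
Proof.
  intros H1 H2 H3. pose proof u_3M_spec. unfold w_u.
  assert (M * u2 <= M * u_3M) by (apply Rmult_le_compat_l; lra).
  assert (M * u1 <= M * u_3M) by (apply Rmult_le_compat_l; lra).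
  assert (0 < (u2 - u1) * ((u1 + u2) - 2 * M * (u1 * u1 + u1 * u2 + u2 * u2)))
    by (apply Rmult_lt_0_compat; nra).
  nra.
Qed.

Lemma w_u_le u1 u2 : 0 <= u1 -> u1 <= u2 -> u2 <= u_3M -> w_u u1 <= w_u u2.
Proof. intros H1 [H2 | ->] H3; [left; now apply w_u_lt | lra]. Qed.

(* Clamping makes the integrand continuous and bounded on all of [R];
   only its values on [[0, u_3M]] matter. *)
Definition inv_w (v : R) : R := / w_u (clamp 0 u_3M v).

(* In the variable [u = 1 / r] the tortoise coordinate is [PI / 2 - G u] (lemma [rstar_G]). *)
Definition G (u : R) : R := RInt inv_w 0 u.

Lemma inv_w_bounds v : / w_max <= inv_w v <= / k ^ 2.
Proof.
  unfold inv_w. pose proof (clamp_in 0 u_3M v (Rlt_le _ _ u_3M_pos)) as Hc.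
  pose proof (w_u_bounds _ Hc). pose proof k2_pos.
  split; apply Rinv_le_contravar; lra.
Qed.

Lemma continuous_inv_w v : continuous inv_w v.
Proof.
  pose proof (Rlt_le _ _ u_3M_pos) as Hu.
  apply (continuous_comp (clamp 0 u_3M) (fun u => / w_u u)); [now apply continuous_clamp|].
  apply (ex_derive_continuous (V := R_NormedModule)). unfold w_u. auto_derive.
  pose proof (w_u_pos _ (clamp_in 0 u_3M v Hu)). unfold w_u in H. lra.
Qed.

Lemma G_sub_bounds u1 u2 :
  u1 <= u2 -> (u2 - u1) / w_max <= G u2 - G u1 <= (u2 - u1) / k ^ 2.
Proof.
  intros Hu. unfold G.
  assert (E : RInt inv_w 0 u2 - RInt inv_w 0 u1 = RInt inv_w u1 u2 :> R)
    by (rewrite (RInt_Chasles_cont inv_w 0 u1 u2) by apply continuous_inv_w; ring).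
  rewrite E.
  assert (H1 : / w_max * RInt (fun _ => 1) u1 u2 <= RInt inv_w u1 u2).
  { apply RInt_ge_scal_cont; auto using continuous_inv_w; [intros; solve_continuous|].
    intros x _. rewrite Rmult_1_r. apply inv_w_bounds. }
  assert (H2 : 1 * RInt inv_w u1 u2 <= RInt (fun _ => / k ^ 2) u1 u2).
  { apply RInt_ge_scal_cont; auto using continuous_inv_w; [intros; solve_continuous|].
    intros x _. rewrite Rmult_1_l. apply inv_w_bounds. }
  rewrite !RInt_const_R in *. unfold Rdiv. lra.
Qed.

Lemma G_0 : G 0 = 0.
Proof. unfold G. rewrite RInt_point. reflexivity. Qed.

Lemma G_lt u1 u2 : u1 < u2 -> G u1 < G u2.
Proof.
  intros H. pose proof (G_sub_bounds u1 u2 (Rlt_le _ _ H)).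
  assert (0 < (u2 - u1) / w_max) by (apply Rdiv_lt_0_compat; [lra | apply w_max_pos]). lra.
Qed.

Lemma G_inj u1 u2 : G u1 = G u2 -> u1 = u2.
Proof.
  intros H. destruct (Rtotal_order u1 u2) as [h | [h | h]]; auto;
    apply G_lt in h; lra.
Qed.

Lemma G_dist_bounds x y :
  Rabs (x - y) / w_max <= Rabs (G x - G y) <= Rabs (x - y) / k ^ 2.
Proof.
  assert (Hle : forall x y, x <= y ->
            Rabs (x - y) / w_max <= Rabs (G x - G y) <= Rabs (x - y) / k ^ 2).
  { intros x' y' h. pose proof (G_sub_bounds x' y' h).
    assert (0 <= (y' - x') / w_max) by (apply Rdiv_le_0_compat; [lra | apply w_max_pos]).
    rewrite (Rabs_minus_sym x'), (Rabs_minus_sym (G x')), !Rabs_pos_eq; lra. }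
  destruct (Rle_dec x y) as [h | h]; [now apply Hle|].
  rewrite (Rabs_minus_sym x), (Rabs_minus_sym (G x)). apply Hle. lra.
Qed.

Lemma continuous_G u : continuous G u.
Proof.
  apply (lipschitz_continuous _ (/ k ^ 2)). intros x y.
  rewrite Rmult_comm. apply G_dist_bounds.
Qed.

Lemma is_derive_G u : is_derive G u (inv_w u).
Proof. apply is_derive_RInt_cont, continuous_inv_w. Qed.

Lemma G_u_3M_pos : 0 < G u_3M.
Proof. rewrite <- G_0. apply G_lt, u_3M_pos. Qed.

(* Inverse of [G] on [[0, u_3M]], clamped so as to be defined and Lipschitz on all of [R]. *)
Definition G_inv (y : R) : R :=
  iota (fun u => 0 <= u <= u_3M /\ G u = clamp 0 (G u_3M) y).

Lemma G_inv_spec y : 0 <= G_inv y <= u_3M /\ G (G_inv y) = clamp 0 (G u_3M) y.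
Proof.
  pose proof u_3M_pos. pose proof G_u_3M_pos as HG.
  pose proof (clamp_in 0 (G u_3M) y (Rlt_le _ _ HG)) as Hc.
  destruct (IVT_gen_consistent G 0 u_3M (clamp 0 (G u_3M) y) continuous_G) as [u [Hu HGu]].
  { rewrite G_0, Rmin_left, Rmax_right; lra. }
  rewrite Rmin_left, Rmax_right in Hu by lra.
  unfold G_inv. rewrite (iota_unique _ u); [now split | | now split].
  intros u' [_ Hu']. apply G_inj. congruence.
Qed.

Lemma continuous_G_inv y : continuous G_inv y.
Proof.
  apply (lipschitz_continuous _ w_max). intros y1 y2.
  destruct (G_inv_spec y1) as [_ E1], (G_inv_spec y2) as [_ E2].
  pose proof (clamp_lipschitz 0 (G u_3M) y1 y2 (Rlt_le _ _ G_u_3M_pos)) as Hcl.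
  rewrite <- E1, <- E2 in Hcl.
  pose proof w_max_pos. pose proof (G_dist_bounds (G_inv y1) (G_inv y2)).
  apply (Rmult_le_reg_r (/ w_max)); [now apply Rinv_0_lt_compat|].
  replace (w_max * Rabs (y1 - y2) * / w_max) with (Rabs (y1 - y2)) by (field; lra).
  unfold Rdiv in *. lra.
Qed.

Lemma is_derive_G_inv_r s : 0 < s -> is_derive (fun r => - G (/ r)) s (inv_w (/ s) / s ^ 2).
Proof.
  intros Hs.
  assert (Hi : is_derive (fun x => / x) s (- / s ^ 2)) by (auto_derive; [lra | field; lra]).
  pose proof (is_derive_opp _ _ _ (is_derive_comp G (fun x => / x) s _ _ (is_derive_G (/ s)) Hi)).
  replace (inv_w (/ s) / s ^ 2) with (opp (scal (- / s ^ 2) (inv_w (/ s)))); [assumption|].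
  unfold opp, scal; simpl; unfold mult; simpl. field. lra.
Qed.

Lemma continuous_inv_w_inv_r s : 0 < s -> continuous (fun r => inv_w (/ r) / r ^ 2) s.
Proof.
  intros Hs. apply continuous_Rmult.
  - apply (continuous_comp (fun x => / x) inv_w); [|apply continuous_inv_w].
    apply (ex_derive_continuous (V := R_NormedModule)). auto_derive. lra.
  - apply (ex_derive_continuous (V := R_NormedModule)). auto_derive.
    assert (0 < s * (s * 1)) by (apply Rmult_lt_0_compat; lra). lra.
Qed.

Lemma inv_w_inv_r s : 3 * M <= s -> inv_w (/ s) / s ^ 2 = s ^ 2 / Defs.Delta M k s.
Proof.
  intros Hs. assert (Hu : 0 < / s <= u_3M)
    by (split; [apply Rinv_0_lt_compat | apply Rinv_le_contravar]; lra).
  unfold inv_w. rewrite clamp_id, Delta_w_u by lra.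
  pose proof (w_u_pos (/ s) ltac:(lra)). field. split; lra.
Qed.

Lemma rstar_G r : 3 * M <= r -> rstar M k r = PI / 2 - G (/ r).
Proof.
  intros Hr. unfold rstar. f_equal.
  set (F := fun s => - G (/ s)).
  set (dF := fun s => inv_w (/ s) / s ^ 2).
  assert (HF : forall s, 0 < s -> is_derive F s (dF s)) by apply is_derive_G_inv_r.
  assert (HdF : forall s, 0 < s -> continuous dF s) by apply continuous_inv_w_inv_r.
  assert (HDF : forall s, 0 < s -> Derive F s = dF s) by (intros; now apply is_derive_unique, HF).
  assert (Hprod : forall P : R * R -> Prop, (forall y, 3 * M < y -> P (r, y)) ->
             filter_prod (at_point r) (Rbar_locally p_infty) P).
  { intros P HP. apply (Filter_prod _ _ _ (fun x => x = r) (fun y => 3 * M < y)).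
    - reflexivity.
    - now exists (3 * M).
    - intros x y -> Hy. now apply HP. }
  assert (Hz : forall y z, 3 * M < y -> Rmin r y <= z -> 3 * M <= z)
    by (intros y z Hy; unfold Rmin; destruct Rle_dec; lra).
  apply is_RInt_gen_unique. replace (G (/ r)) with (0 - F r) by (unfold F; ring).
  apply (is_RInt_gen_ext (Derive F)).
  - apply Hprod. intros y Hy z Hzy. simpl in Hzy.
    assert (3 * M <= z) by (apply (Hz y); lra). rewrite HDF by lra. now apply inv_w_inv_r.
  - apply is_RInt_gen_Derive.
    + apply Hprod. intros y Hy z Hzy. simpl in Hzy.
      assert (3 * M <= z) by (apply (Hz y); lra). exists (dF z). apply HF. lra.
    + apply Hprod. intros y Hy z Hzy. simpl in Hzy.
      assert (3 * M <= z) by (apply (Hz y); lra).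
      apply (continuous_ext_loc _ dF); [|apply HdF; lra].
      apply (locally_interval _ z 0 p_infty); [simpl; lra | exact I |].
      intros t Ht _. simpl in Ht. symmetry. now apply HDF.
    + intros P HP. apply (locally_singleton _ _ HP).
    + apply (filterlim_comp _ _ _ (fun x => / x) (fun u => - G u) _ (locally 0)).
      * apply (filterlim_Rbar_inv p_infty). discriminate.
      * pose proof (continuous_opp (V := R_NormedModule) G 0 (continuous_G 0)) as Hc.
        unfold continuous in Hc. rewrite G_0 in Hc. change (opp 0) with (- 0) in Hc.
        now rewrite Ropp_0 in Hc.
Qed.

Lemma rstar3M_G : rstar3M M k = PI / 2 - G u_3M.
Proof. unfold rstar3M. rewrite rstar_G by lra. reflexivity. Qed.

Lemma rstar3M_lt_PI2 : rstar3M M k < PI / 2.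
Proof. rewrite rstar3M_G. pose proof G_u_3M_pos. lra. Qed.

(* [u = 1 / r] as a function of the tortoise coordinate [r*]. *)
Definition u_of (x : R) : R := G_inv (PI / 2 - x).

Lemma u_of_spec x : rstar3M M k <= x <= PI / 2 ->
  0 <= u_of x <= u_3M /\ G (u_of x) = PI / 2 - x.
Proof.
  intros Hx. rewrite rstar3M_G in Hx. destruct (G_inv_spec (PI / 2 - x)) as [H1 H2].
  split; [exact H1|]. unfold u_of. rewrite H2. apply clamp_id. lra.
Qed.

Lemma u_of_pos x : rstar3M M k <= x < PI / 2 -> 0 < u_of x.
Proof.
  intros Hx. destruct (u_of_spec x ltac:(lra)) as [[[H1 | H1] _] H2]; [exact H1|].
  rewrite <- H1, G_0 in H2. lra.
Qed.

Lemma u_of_lt x x' : rstar3M M k <= x -> x < x' -> x' <= PI / 2 -> u_of x' < u_of x.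
Proof.
  intros H1 H2 H3.
  destruct (u_of_spec x ltac:(lra)) as [_ E], (u_of_spec x' ltac:(lra)) as [_ E'].
  destruct (Rlt_le_dec (u_of x') (u_of x)) as [h | h]; [exact h|].
  destruct h as [h | h]; [apply G_lt in h | rewrite h in E]; lra.
Qed.

Lemma u_of_le x x' : rstar3M M k <= x -> x <= x' -> x' <= PI / 2 -> u_of x' <= u_of x.
Proof. intros H1 [H2 | ->] H3; [left; now apply u_of_lt | lra]. Qed.

Lemma continuous_u_of x : continuous u_of x.
Proof.
  apply (continuous_comp (fun x => PI / 2 - x) G_inv); [|apply continuous_G_inv].
  apply (ex_derive_continuous (V := R_NormedModule)). auto_derive. exact I.
Qed.

Lemma r_of_u_of x : rstar3M M k <= x < PI / 2 -> r_of M k x = / u_of x.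
Proof.
  intros Hx. pose proof (u_of_pos x Hx). destruct (u_of_spec x ltac:(lra)) as [Hu HG].
  assert (H3M : 3 * M <= / u_of x).
  { replace (3 * M) with (/ u_3M) by (unfold u_3M; now rewrite Rinv_inv).
    apply Rinv_le_contravar; lra. }
  unfold r_of. rewrite (iota_unique _ (/ u_of x)); [reflexivity | |].
  - intros r [Hr Hrx]. rewrite rstar_G in Hrx by exact Hr.
    assert (Hr' : 0 < / r <= u_3M)
      by (split; [apply Rinv_0_lt_compat | apply Rinv_le_contravar]; unfold u_3M; lra).
    rewrite <- (G_inj (/ r) (u_of x)) by lra. now rewrite Rinv_inv.
  - split; [exact H3M|]. rewrite rstar_G, Rinv_inv; lra.
Qed.

(* Agrees with [Vpot] on [[r*_3M, PI / 2)] (lemma [Vpot_V_u]), outside of which [Vpot]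
   takes junk values, and is continuous on all of [R]. *)
Definition V_u (l : nat) (x : R) : R := w_u (u_of x) * (Lam l - 6 * M * u_of x).

Lemma Vpot_V_u l x : rstar3M M k <= x < PI / 2 -> Vpot M k l x = V_u l x.
Proof.
  intros Hx. pose proof (u_of_pos x Hx).
  unfold Vpot, w, V_u. rewrite r_of_u_of, Delta_w_u, Rinv_inv by (auto; now apply Rinv_0_lt_compat).
  field. lra.
Qed.

Lemma continuous_V_u l x : continuous (V_u l) x.
Proof.
  apply (continuous_comp u_of (fun u => w_u u * (Lam l - 6 * M * u))); [apply continuous_u_of|].
  apply (ex_derive_continuous (V := R_NormedModule)). unfold w_u. auto_derive. exact I.
Qed.

End Tortoise.

(** * The Rayleigh quotient *)

Lemma Lam_bounds l : (2 <= l)%nat -> 6 <= Lam l /\ INR l <= Lam l /\ INR l ^ 2 <= Lam l.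
Proof. intros Hl. apply le_INR in Hl. simpl in Hl. unfold Lam. repeat split; nra. Qed.

Section Quotient.

Variables M k : R.
Hypothesis HM : 0 < M.
Hypothesis Hk : 0 < k.

Local Notation a := (rstar3M M k).
Local Notation b := (PI / 2).

Lemma M_u_bounds u : 0 <= u <= u_3M M -> 0 <= 6 * M * u <= 2.
Proof.
  intros Hu. pose proof (u_3M_spec M HM).
  assert (M * u <= M * u_3M M) by (apply Rmult_le_compat_l; lra).
  assert (0 <= M * u) by (apply Rmult_le_pos; lra). lra.
Qed.

Lemma V_u_bounds l x : (2 <= l)%nat -> a <= x <= b ->
  0 <= V_u M k l x <= Lam l * w_max M k.
Proof.
  intros Hl Hx. destruct (u_of_spec M k HM Hk x Hx) as [Hu _].
  pose proof (w_u_bounds M k HM _ Hu). pose proof (M_u_bounds _ Hu).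
  pose proof (k2_pos k Hk). destruct (Lam_bounds l Hl) as [HL _].
  unfold V_u. split; [apply Rmult_le_pos; lra|].
  rewrite Rmult_comm. apply Rmult_le_compat; lra.
Qed.

Lemma V_u_ge l x : (2 <= l)%nat -> a <= x <= b ->
  w_u M k (u_of M k x) * (Lam l - 2) <= V_u M k l x.
Proof.
  intros Hl Hx. destruct (u_of_spec M k HM Hk x Hx) as [Hu _].
  pose proof (w_u_pos M k HM Hk _ Hu). pose proof (M_u_bounds _ Hu).
  unfold V_u. apply Rmult_le_compat_l; lra.
Qed.

Lemma V_u_le_tail l p x : (2 <= l)%nat -> a <= p <= x -> x <= b ->
  V_u M k l x <= Lam l * w_u M k (u_of M k p).
Proof.
  intros Hl Hp Hx. destruct (u_of_spec M k HM Hk x ltac:(lra)) as [Hu _].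
  destruct (u_of_spec M k HM Hk p ltac:(lra)) as [Hup _].
  pose proof (u_of_le M k HM Hk p x ltac:(lra) ltac:(lra) Hx).
  pose proof (w_u_le M k HM (u_of M k x) (u_of M k p) ltac:(lra) H ltac:(lra)).
  pose proof (w_u_pos M k HM Hk _ Hu). pose proof (M_u_bounds _ Hu).
  destruct (Lam_bounds l Hl) as [HL _].
  unfold V_u. rewrite Rmult_comm. apply Rmult_le_compat; lra.
Qed.

Lemma num_Q_V_u l (f : R -> R) :
  num_Q M k l f = RInt (fun x => Derive f x ^ 2 + V_u M k l x * f x ^ 2) a b
                  + 6 * M * k ^ 2 / (Lam l - 2) * f b ^ 2.
Proof.
  unfold num_Q. f_equal. apply RInt_ext_R. pose proof (rstar3M_lt_PI2 M k HM Hk).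
  rewrite Rmin_left, Rmax_right by lra. intros x Hx.
  rewrite Vpot_V_u by (auto; lra). reflexivity.
Qed.

Lemma num_Q_sub_den_Q l (f : R -> R) lam : C1 f ->
  num_Q M k l f - lam * den_Q M k l f
  = RInt (fun x => Derive f x ^ 2 + (V_u M k l x - lam) * f x ^ 2) a b
    + (6 * M * k ^ 2 / (Lam l - 2) - lam * (12 * M / (Lam l * (Lam l - 2)))) * f b ^ 2.
Proof.
  intros Hf. assert (Hfc := fun x => C1_continuous f x Hf).
  assert (HDf : forall x, continuous (Derive f) x) by apply Hf.
  assert (HV := continuous_V_u M k HM Hk l).
  rewrite num_Q_V_u. unfold den_Q.
  rewrite (RInt_ext_R (fun x => Derive f x ^ 2 + (V_u M k l x - lam) * f x ^ 2)
             (fun x => 1 * (Derive f x ^ 2 + V_u M k l x * f x ^ 2) + (- lam) * f x ^ 2))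
    by (intros; ring).
  rewrite RInt_lincomb by (intros; solve_continuous). ring.
Qed.

Lemma num_Q_nonneg l (f : R -> R) : (2 <= l)%nat -> C1 f -> 0 <= num_Q M k l f.
Proof.
  intros Hl Hf. assert (Hfc := fun x => C1_continuous f x Hf).
  assert (HDf : forall x, continuous (Derive f) x) by apply Hf.
  assert (HV := continuous_V_u M k HM Hk l).
  pose proof (rstar3M_lt_PI2 M k HM Hk). destruct (Lam_bounds l Hl) as [HL _].
  rewrite num_Q_V_u. apply Rplus_le_le_0_compat.
  - apply RInt_ge_0_cont; [lra | intros; solve_continuous|].
    intros x Hx. destruct (V_u_bounds l x Hl ltac:(lra)).
    pose proof (pow2_ge_0 (Derive f x)). pose proof (pow2_ge_0 (f x)). nra.
  - apply Rmult_le_pos; [|apply pow2_ge_0]. pose proof (k2_pos k Hk).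
    apply Rdiv_le_0_compat; [nra | lra].
Qed.

Lemma den_Q_pos l (f : R -> R) x0 : (2 <= l)%nat -> (forall x, continuous f x) ->
  a <= x0 <= b -> f x0 <> 0 -> 0 < den_Q M k l f.
Proof.
  intros Hl Hf Hx0 Hfx0. pose proof (rstar3M_lt_PI2 M k HM Hk).
  destruct (Lam_bounds l Hl) as [HL _]. unfold den_Q.
  apply Rplus_lt_le_0_compat.
  - now apply (RInt_sqr_gt_0 _ _ _ x0).
  - apply Rmult_le_pos; [|apply pow2_ge_0]. apply Rdiv_le_0_compat; nra.
Qed.

Lemma quotQ_ext l (f g : R -> R) :
  (forall x, a <= x <= b -> f x = g x /\ Derive f x = Derive g x) ->
  quotQ M k l f = quotQ M k l g.
Proof.
  intros Hfg. pose proof (rstar3M_lt_PI2 M k HM Hk).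
  destruct (Hfg b ltac:(lra)) as [Eb _].
  unfold quotQ, num_Q, den_Q. rewrite Eb.
  rewrite (RInt_ext_R (fun x => Derive f x ^ 2 + Vpot M k l x * f x ^ 2)
                      (fun x => Derive g x ^ 2 + Vpot M k l x * g x ^ 2)),
          (RInt_ext_R (fun x => f x ^ 2) (fun x => g x ^ 2)); [reflexivity | |];
    rewrite Rmin_left, Rmax_right by lra; intros x Hx;
    destruct (Hfg x ltac:(lra)) as [E1 E2]; now rewrite E1, ?E2.
Qed.

Lemma admissible_of_C1 (f : R -> R) x0 :
  C1 f -> f a = 0 -> a <= x0 <= b -> f x0 <> 0 -> admissible M k f.
Proof.
  intros Hf Ha Hx0 Hfx0. split; [intros x _; apply Hf | split; [exact Ha | now exists x0]].
Qed.

Lemma minimiser_C1_extension l (f : R -> R) : is_QM_minimiser M k l f ->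
  exists g, C1 g /\ (forall x, a <= x <= b -> g x = f x /\ Derive g x = Derive f x)
            /\ is_QM_minimiser M k l g.
Proof.
  intros [[Hf [Hfa [x0 [Hx0 Hfx0]]]] Hmin]. pose proof (rstar3M_lt_PI2 M k HM Hk).
  destruct (C1_extension f a b ltac:(lra) Hf) as [g [Hg Hgf]].
  exists g. split; [exact Hg|]. split; [exact Hgf|]. split.
  - apply (admissible_of_C1 g x0 Hg).
    + destruct (Hgf a ltac:(lra)) as [E _]. now rewrite E.
    + exact Hx0.
    + destruct (Hgf x0 Hx0) as [E _]. now rewrite E.
  - intros h Hh. rewrite (quotQ_ext l g f Hgf). now apply Hmin.
Qed.

Lemma quotQ_nonneg l (f : R -> R) :
  (2 <= l)%nat -> C1 f -> admissible M k f -> 0 <= quotQ M k l f.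
Proof.
  intros Hl Hf [_ [_ [x0 [Hx0 Hfx0]]]]. apply Rdiv_le_0_compat; [now apply num_Q_nonneg|].
  apply (den_Q_pos l f x0); auto. intros; now apply C1_continuous.
Qed.

Lemma minimiser_num_sub_den_nonneg l (f g : R -> R) :
  (2 <= l)%nat -> is_QM_minimiser M k l f -> C1 g -> admissible M k g ->
  0 <= num_Q M k l g - quotQ M k l f * den_Q M k l g.
Proof.
  intros Hl [_ Hmin] Hg Hadm. pose proof (Hmin g Hadm) as Hq.
  destruct Hadm as [_ [_ [x0 [Hx0 Hgx0]]]].
  assert (Hden : 0 < den_Q M k l g)
    by (apply (den_Q_pos l g x0); auto; intros; now apply C1_continuous).
  unfold quotQ at 2 in Hq. apply (Rmult_le_compat_r (den_Q M k l g)) in Hq; [|lra].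
  replace (num_Q M k l g / den_Q M k l g * den_Q M k l g) with (num_Q M k l g) in Hq
    by (field; lra).
  lra.
Qed.

Lemma first_variation l (f h : R -> R) :
  (2 <= l)%nat -> C1 f -> is_QM_minimiser M k l f -> C1 h -> h a = 0 -> h b = 0 ->
  RInt (fun x => Derive f x * Derive h x + (V_u M k l x - quotQ M k l f) * f x * h x) a b = 0.
Proof.
  intros Hl Hf Hmin Hh Hha Hhb. destruct (proj1 Hmin) as [_ [Hfa [x0 [Hx0 Hfx0]]]].
  set (lam := quotQ M k l f).
  assert (Hfc := fun x => C1_continuous f x Hf). assert (Hhc := fun x => C1_continuous h x Hh).
  assert (HDf : forall x, continuous (Derive f) x) by apply Hf.
  assert (HDh : forall x, continuous (Derive h) x) by apply Hh.
  assert (HV := continuous_V_u M k HM Hk l).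
  assert (Hden : 0 < den_Q M k l f) by now apply (den_Q_pos l f x0).
  assert (Hcrit : num_Q M k l f - lam * den_Q M k l f = 0) by (unfold lam, quotQ; field; lra).
  rewrite num_Q_sub_den_Q in Hcrit by exact Hf.
  apply (Rmult_eq_reg_l 2); [rewrite Rmult_0_r | lra].
  apply (linear_coef_0_of_nonneg _
           (RInt (fun x => Derive h x ^ 2 + (V_u M k l x - lam) * h x ^ 2) a b)
           (Rabs (f x0) / (Rabs (h x0) + 1))).
  { apply Rdiv_lt_0_compat; [now apply Rabs_pos_lt | pose proof (Rabs_pos (h x0)); lra]. }
  intros t Ht.
  set (g := fun x => f x + t * h x).
  assert (Hg : forall x, is_derive g x (Derive f x + t * Derive h x))
    by (intros x; apply is_derive_plus_scal; apply Derive_correct; [apply Hf | apply Hh]).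
  assert (HgC1 : C1 g) by (apply (C1_of_is_derive g _ Hg); intros; solve_continuous).
  assert (Hgx0 : g x0 <> 0) by (apply add_small_neq_0; lra).
  assert (Hpos := minimiser_num_sub_den_nonneg l f g Hl Hmin HgC1
                    (admissible_of_C1 g x0 HgC1 ltac:(unfold g; rewrite Hfa, Hha; ring) Hx0 Hgx0)).
  fold lam in Hpos. rewrite num_Q_sub_den_Q in Hpos by exact HgC1.
  replace (g b) with (f b) in Hpos by (unfold g; rewrite Hhb; ring).
  rewrite (RInt_ext_R _
    (fun x => (Derive f x ^ 2 + (V_u M k l x - lam) * f x ^ 2)
              + (2 * t) * (Derive f x * Derive h x + (V_u M k l x - lam) * f x * h x)
              + t ^ 2 * (Derive h x ^ 2 + (V_u M k l x - lam) * h x ^ 2))) in Hpos.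
  - rewrite RInt_lincomb3 in Hpos by (intros; solve_continuous). lra.
  - intros x _. rewrite (is_derive_unique _ _ _ (Hg x)). unfold g. ring.
Qed.

Lemma boundary_coef_le l : (2 <= l)%nat -> 6 * M * k ^ 2 / (Lam l - 2) <= 2 * M * k ^ 2.
Proof.
  intros Hl. destruct (Lam_bounds l Hl) as [HL _].
  apply (Rmult_le_reg_r (Lam l - 2)); [lra|].
  replace (6 * M * k ^ 2 / (Lam l - 2) * (Lam l - 2)) with (6 * M * k ^ 2) by (field; lra).
  assert (0 < M * k ^ 2) by (apply Rmult_lt_0_compat; [lra | now apply k2_pos]). nra.
Qed.

Lemma num_Q_le_of_vanishing l (g : R -> R) p : (2 <= l)%nat -> C1 g -> a <= p <= b ->
  (forall x, x <= p -> g x = 0) ->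
  num_Q M k l g <= RInt (fun x => Derive g x ^ 2) a b
                   + Lam l * w_u M k (u_of M k p) * RInt (fun x => g x ^ 2) a b
                   + 2 * M * k ^ 2 * g b ^ 2.
Proof.
  intros Hl Hg Hp Hg0.
  assert (Hgc := fun x => C1_continuous g x Hg).
  assert (HDg : forall x, continuous (Derive g) x) by apply Hg.
  assert (HV := continuous_V_u M k HM Hk l).
  pose proof (rstar3M_lt_PI2 M k HM Hk).
  rewrite num_Q_V_u, <- (Rmult_1_l (RInt (fun x => Derive g x ^ 2) a b)), <- RInt_lincomb
    by (intros; solve_continuous).
  pose proof (boundary_coef_le l Hl). pose proof (pow2_ge_0 (g b)).
  enough (RInt (fun x => Derive g x ^ 2 + V_u M k l x * g x ^ 2) a b
          <= RInt (fun x => 1 * Derive g x ^ 2 + Lam l * w_u M k (u_of M k p) * g x ^ 2) a b)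
    by nra.
  apply RInt_le_cont; [lra | intros; solve_continuous | intros; solve_continuous|].
  intros x Hx. destruct (Rle_dec x p) as [h | h].
  - rewrite Hg0 by exact h. lra.
  - pose proof (V_u_le_tail l p x Hl ltac:(lra) ltac:(lra)). pose proof (pow2_ge_0 (g x)). nra.
Qed.

Lemma quotQ_le_trial l (g : R -> R) p : (2 <= l)%nat -> C1 g -> a <= p < b ->
  (forall x, x <= p -> g x = 0) -> g b <> 0 ->
  quotQ M k l g <= Lam l * w_u M k (u_of M k p)
    + (RInt (fun x => Derive g x ^ 2) a b + 2 * M * k ^ 2 * g b ^ 2)
      / RInt (fun x => g x ^ 2) a b.
Proof.
  intros Hl Hg Hp Hg0 Hgb.
  pose proof (rstar3M_lt_PI2 M k HM Hk). destruct (Lam_bounds l Hl) as [HL _].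
  pose proof (num_Q_le_of_vanishing l g p Hl Hg ltac:(lra) Hg0) as Hnum.
  pose proof (num_Q_nonneg l g Hl Hg).
  set (cg := RInt (fun x => g x ^ 2) a b) in *.
  assert (Hcg : 0 < cg) by (apply (RInt_sqr_gt_0 _ _ _ b); auto using C1_continuous; lra).
  assert (Hden : cg <= den_Q M k l g).
  { unfold den_Q. fold cg. pose proof (pow2_ge_0 (g b)).
    assert (0 <= 12 * M / (Lam l * (Lam l - 2))) by (apply Rdiv_le_0_compat; nra). nra. }
  unfold quotQ. apply (Rle_trans _ (num_Q M k l g / cg)).
  - unfold Rdiv. apply Rmult_le_compat_l; [lra|]. now apply Rinv_le_contravar.
  - apply (Rmult_le_reg_r cg); [lra|].
    replace ((Lam l * w_u M k (u_of M k p)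
              + (RInt (fun x => Derive g x ^ 2) a b + 2 * M * k ^ 2 * g b ^ 2) / cg) * cg)
      with (RInt (fun x => Derive g x ^ 2) a b + Lam l * w_u M k (u_of M k p) * cg
            + 2 * M * k ^ 2 * g b ^ 2) by (field; lra).
    replace (num_Q M k l g / cg * cg) with (num_Q M k l g) by (field; lra). exact Hnum.
Qed.

Lemma quotQ_upper p : a < p < b ->
  exists Cq, 0 <= Cq /\ forall l (f : R -> R), (2 <= l)%nat -> is_QM_minimiser M k l f ->
    quotQ M k l f <= Lam l * w_u M k (u_of M k p) + Cq.
Proof.
  intros Hp.
  set (dg := fun s => (clamp p b s - p) ^ 2).
  assert (Hdg : forall x, continuous dg x)
    by (intros; unfold dg; solve_continuous; apply continuous_clamp; lra).
  set (g := fun x => RInt dg p x).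
  assert (Hg : forall x, is_derive g x (dg x)) by now apply is_derive_RInt_cont.
  assert (HgC1 : C1 g) by exact (C1_of_is_derive g dg Hg Hdg).
  assert (Hg0 : forall x, x <= p -> g x = 0).
  { intros x Hx. unfold g.
    rewrite (RInt_ext_R _ (fun _ => 0)), RInt_const_R, Rmult_0_r; [reflexivity|].
    rewrite Rmin_right, Rmax_left by lra. intros s Hs.
    unfold dg, clamp, Rmax, Rmin. repeat destruct Rle_dec; lra. }
  assert (Hgb : 0 < g b).
  { apply RInt_gt_0; [lra | | intros; apply Hdg].
    intros s Hs. unfold dg. rewrite clamp_id by lra. apply pow_lt. lra. }
  set (Cq := (RInt (fun x => Derive g x ^ 2) a b + 2 * M * k ^ 2 * g b ^ 2)
             / RInt (fun x => g x ^ 2) a b).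
  exists Cq. split.
  - assert (Hgc := fun x => C1_continuous g x HgC1).
    assert (HDg : forall x, continuous (Derive g) x) by apply HgC1.
    pose proof (rstar3M_lt_PI2 M k HM Hk).
    apply Rdiv_le_0_compat.
    + apply Rplus_le_le_0_compat; [apply RInt_ge_0_cont; [lra | intros; solve_continuous |
        intros; apply pow2_ge_0]|].
      pose proof (k2_pos k Hk). pose proof (pow2_ge_0 (g b)).
      apply Rmult_le_pos; [nra | lra].
    + apply (RInt_sqr_gt_0 _ _ _ b); auto; lra.
  - intros l f Hl [_ Hmin].
    apply (Rle_trans _ (quotQ M k l g)).
    + apply Hmin. apply (admissible_of_C1 g b HgC1); [apply Hg0 | | lra]; lra.
    + apply quotQ_le_trial; auto; lra.
Qed.

End Quotient.

(** * Agmon estimate *)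

Lemma Lam_nonneg l : 0 <= Lam l.
Proof. unfold Lam. pose proof (pos_INR l). nra. Qed.

Lemma energy_nonneg l (f : R -> R) x : 0 <= energy l f x.
Proof.
  unfold energy. pose proof (Lam_nonneg l).
  pose proof (pow2_ge_0 (Derive f x)). pose proof (pow2_ge_0 (f x)). nra.
Qed.

Lemma continuous_energy l (f : R -> R) x : C1 f -> continuous (energy l f) x.
Proof.
  intros Hf. assert (Hfc := fun x => C1_continuous f x Hf).
  assert (HDf : forall x, continuous (Derive f) x) by apply Hf.
  unfold energy. solve_continuous.
Qed.

Definition agmon_weight (mu x : R) : R := exp (2 * mu * (PI / 2 - x)).

Lemma continuous_agmon_weight mu x : continuous (agmon_weight mu) x.
Proof.
  apply (ex_derive_continuous (V := R_NormedModule)). unfold agmon_weight. auto_derive. exact I.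
Qed.

Lemma agmon_weight_PI2 mu : agmon_weight mu (PI / 2) = 1.
Proof. unfold agmon_weight. rewrite Rminus_diag, Rmult_0_r. apply exp_0. Qed.

Lemma agmon_weight_le mu x y : 0 <= mu -> x <= y -> agmon_weight mu y <= agmon_weight mu x.
Proof.
  intros Hmu Hxy. unfold agmon_weight. apply exp_le_compat. nra.
Qed.

Lemma agmon_weight_ratio mu x y :
  agmon_weight mu y = agmon_weight mu x * exp (- (2 * mu * (y - x))).
Proof. unfold agmon_weight. rewrite <- exp_plus. f_equal. ring. Qed.

Lemma agmon_integrand_ge (d g v mu c L : R) :
  c <= 1 / 2 -> c * L + 2 * mu ^ 2 <= v ->
  c * (d ^ 2 + L * g ^ 2) <= d ^ 2 - 2 * mu * g * d + v * g ^ 2.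
Proof.
  intros Hc Hv. pose proof (pow2_ge_0 (d - 2 * mu * g)). pose proof (pow2_ge_0 g).
  assert (0 <= (v - c * L - 2 * mu ^ 2) * g ^ 2) by (apply Rmult_le_pos; lra).
  assert (0 <= (1 / 2 - c) * d ^ 2) by (apply Rmult_le_pos; [lra | apply pow2_ge_0]).
  nra.
Qed.

Lemma agmon_integrand_ge_neg (d g v mu B : R) :
  2 * mu ^ 2 - v <= B -> - B * g ^ 2 <= d ^ 2 - 2 * mu * g * d + v * g ^ 2.
Proof.
  intros Hv. pose proof (pow2_ge_0 (d - mu * g)). pose proof (pow2_ge_0 g).
  pose proof (pow2_ge_0 mu).
  assert (0 <= (v + B - 2 * mu ^ 2) * g ^ 2) by (apply Rmult_le_pos; lra). nra.
Qed.

Section Agmon.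

Variables M k : R.
Hypothesis HM : 0 < M.
Hypothesis Hk : 0 < k.
Variables (l : nat) (f : R -> R) (mu : R).
Hypothesis Hl : (2 <= l)%nat.
Hypothesis Hf : C1 f.
Hypothesis Hmin : is_QM_minimiser M k l f.
Hypothesis Hmu : 0 <= mu.

Local Notation a := (rstar3M M k).
Local Notation b := (PI / 2).
Local Notation lam := (quotQ M k l f).
Local Notation E := (agmon_weight mu).

Definition agmon_density (x : R) : R :=
  E x * (Derive f x ^ 2 - 2 * mu * f x * Derive f x + (V_u M k l x - lam) * f x ^ 2).

Let Hfc := fun x => C1_continuous f x Hf.
Let HDf : forall x, continuous (Derive f) x := fun x => proj2 (Hf x).
Let HV := continuous_V_u M k HM Hk l.
Let HE := continuous_agmon_weight mu.

Lemma continuous_agmon_density x : continuous agmon_density x.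
Proof. unfold agmon_density. solve_continuous. Qed.

(* [first_variation] tested against [h = (E - 1) f], which vanishes at both ends. *)
Lemma agmon_identity :
  RInt agmon_density a b = RInt (fun x => Derive f x ^ 2 + (V_u M k l x - lam) * f x ^ 2) a b.
Proof.
  set (h := fun x => (E x - 1) * f x).
  assert (Hh : forall x, is_derive h x (- 2 * mu * E x * f x + (E x - 1) * Derive f x)).
  { intros x. unfold h.
    apply (is_derive_mult (fun y => E y - 1) f x (- 2 * mu * E x) (Derive f x));
      [| apply Derive_correct, Hf | intros; apply Rmult_comm].
    unfold agmon_weight. auto_derive; [exact I | unfold Rminus; R_ring]. }
  assert (HhC1 : C1 h) by (apply (C1_of_is_derive h _ Hh); intros; solve_continuous).
  assert (Hhc := fun x => C1_continuous h x HhC1).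
  assert (HDh : forall x, continuous (Derive h) x) by apply HhC1.
  pose proof (first_variation M k HM Hk l f h Hl Hf Hmin HhC1) as Hfv.
  rewrite (RInt_ext_R agmon_density
             (fun x => 1 * (Derive f x ^ 2 + (V_u M k l x - lam) * f x ^ 2)
                       + 1 * (Derive f x * Derive h x + (V_u M k l x - lam) * f x * h x))).
  - rewrite RInt_lincomb, Hfv; [R_ring | | | |]; try (intros; solve_continuous).
    + unfold h. destruct Hmin as [[_ [Hfa _]] _]. rewrite Hfa. ring.
    + unfold h. rewrite agmon_weight_PI2. ring.
  - intros x _. rewrite (is_derive_unique _ _ _ (Hh x)). unfold agmon_density, h. ring.
Qed.

Lemma RInt_agmon_density_le :
  RInt agmon_density a b <= (1 + w_max M k) * RInt (energy l f) a b.
Proof.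
  pose proof (rstar3M_lt_PI2 M k HM Hk).
  pose proof (quotQ_nonneg M k HM Hk l f Hl Hf (proj1 Hmin)).
  pose proof (w_max_pos M k Hk).
  rewrite agmon_identity. apply RInt_le_scal_cont;
    [lra | intros; solve_continuous | intros; now apply continuous_energy|].
  intros x Hx. destruct (V_u_bounds M k HM Hk l x Hl ltac:(lra)) as [_ HV'].
  unfold energy. pose proof (pow2_ge_0 (Derive f x)). pose proof (pow2_ge_0 (f x)).
  assert ((V_u M k l x - lam) * f x ^ 2 <= Lam l * w_max M k * f x ^ 2)
    by (apply Rmult_le_compat_r; lra).
  pose proof (Lam_nonneg l). nra.
Qed.

Section Decay.

Variables (r0 x1 c K : R).
Hypothesis Hr0 : a <= r0 <= x1.
Hypothesis Hx1 : x1 <= b.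
Hypothesis Hc : 0 < c <= 1 / 2.
Hypothesis HK : 0 <= K.
Hypothesis Hgap : forall x, a <= x <= x1 -> c * Lam l + 2 * mu ^ 2 <= V_u M k l x - lam.
Hypothesis Htail : lam + 2 * mu ^ 2 <= K * Lam l.

Lemma RInt_agmon_density_ge_left : c * E r0 * RInt (energy l f) a r0 <= RInt agmon_density a x1.
Proof.
  assert (Hpt : forall x, a <= x <= x1 -> c * E x * energy l f x <= agmon_density x).
  { intros x Hx. pose proof (exp_pos (2 * mu * (b - x))).
    pose proof (agmon_integrand_ge (Derive f x) (f x) (V_u M k l x - lam) mu c (Lam l)
                  ltac:(lra) (Hgap x Hx)).
    unfold agmon_density, energy, agmon_weight in *. nra. }
  rewrite (RInt_Chasles_cont agmon_density a r0 x1) by apply continuous_agmon_density.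
  assert (0 <= RInt agmon_density r0 x1).
  { apply RInt_ge_0_cont; [lra | apply continuous_agmon_density|]. intros x Hx.
    pose proof (Hpt x ltac:(lra)). pose proof (energy_nonneg l f x).
    assert (0 <= c * E x) by (apply Rmult_le_pos; [lra | left; apply exp_pos]).
    assert (0 <= c * E x * energy l f x) by now apply Rmult_le_pos. lra. }
  enough (c * E r0 * RInt (energy l f) a r0 <= RInt agmon_density a r0) by lra.
  apply RInt_ge_scal_cont;
    [lra | apply continuous_agmon_density | intros; now apply continuous_energy|].
  intros x Hx. apply (Rle_trans _ (c * E x * energy l f x)); [|apply Hpt; lra].
  apply Rmult_le_compat_r; [apply energy_nonneg|]. apply Rmult_le_compat_l; [lra|].
  apply agmon_weight_le; lra.
Qed.

Lemma RInt_agmon_density_ge_right : - (K * E x1) * RInt (energy l f) a b <= RInt agmon_density x1 b.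
Proof.
  pose proof (quotQ_nonneg M k HM Hk l f Hl Hf (proj1 Hmin)). pose proof (Lam_nonneg l).
  assert (HE1 : 0 < E x1) by apply exp_pos.
  assert (Hsq : Lam l * RInt (fun x => f x ^ 2) x1 b <= RInt (energy l f) a b).
  { rewrite (RInt_Chasles_cont (energy l f) a x1 b) by (intros; now apply continuous_energy).
    assert (0 <= RInt (energy l f) a x1)
      by (apply RInt_ge_0_cont;
          [lra | intros; now apply continuous_energy | intros; apply energy_nonneg]).
    enough (Lam l * RInt (fun x => f x ^ 2) x1 b <= RInt (energy l f) x1 b) by lra.
    apply RInt_ge_scal_cont;
      [lra | intros; now apply continuous_energy | intros; solve_continuous|].
    intros x _. unfold energy. pose proof (pow2_ge_0 (Derive f x)). lra. }
  apply (Rle_trans _ (- (K * Lam l * E x1) * RInt (fun x => f x ^ 2) x1 b)).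
  { assert (0 <= K * E x1) by (apply Rmult_le_pos; lra). nra. }
  apply RInt_ge_scal_cont; [lra | apply continuous_agmon_density | intros; solve_continuous|].
  intros x Hx. unfold agmon_density.
  destruct (V_u_bounds M k HM Hk l x Hl ltac:(lra)) as [HV0 _].
  pose proof (agmon_integrand_ge_neg (Derive f x) (f x) (V_u M k l x - lam) mu (K * Lam l)
                ltac:(lra)).
  assert (HEx : E x <= E x1) by (apply agmon_weight_le; lra).
  assert (0 < E x) by apply exp_pos.
  assert (0 <= K * Lam l * f x ^ 2) by (apply Rmult_le_pos; [nra | apply pow2_ge_0]).
  nra.
Qed.

Lemma agmon_estimate_C1 :
  RInt (energy l f) a r0
  <= (1 + w_max M k + K) / c * exp (- (2 * mu * (x1 - r0))) * RInt (energy l f) a b.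
Proof.
  pose proof RInt_agmon_density_ge_left. pose proof RInt_agmon_density_ge_right.
  pose proof RInt_agmon_density_le. pose proof (w_max_pos M k Hk).
  rewrite (RInt_Chasles_cont agmon_density a x1 b) in H1 by apply continuous_agmon_density.
  assert (HIf : 0 <= RInt (energy l f) a b).
  { pose proof (rstar3M_lt_PI2 M k HM Hk). apply RInt_ge_0_cont;
      [lra | intros; now apply continuous_energy | intros; apply energy_nonneg]. }
  assert (HE1 : 1 <= E x1) by (rewrite <- (agmon_weight_PI2 mu); now apply agmon_weight_le).
  assert (HEr0 : 0 < E r0) by apply exp_pos.
  assert (Hkey : c * E r0 * RInt (energy l f) a r0
                 <= (1 + w_max M k + K) * E x1 * RInt (energy l f) a b).
  { assert ((1 + w_max M k) * RInt (energy l f) a b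
            <= (1 + w_max M k) * E x1 * RInt (energy l f) a b).
    { rewrite Rmult_assoc. apply Rmult_le_compat_l; [lra|]. nra. }
    nra. }
  rewrite (agmon_weight_ratio mu r0 x1) in Hkey.
  apply (Rmult_le_reg_l (c * E r0)); [now apply Rmult_lt_0_compat|].
  apply (Rle_trans _ _ _ Hkey). right. field. lra.
Qed.

End Decay.

End Agmon.

Lemma RInt_energy_ext l (f g : R -> R) y z : y <= z ->
  (forall x, y <= x <= z -> f x = g x /\ Derive f x = Derive g x) ->
  RInt (energy l f) y z = RInt (energy l g) y z.
Proof.
  intros Hyz Hfg. apply RInt_ext_R. rewrite Rmin_left, Rmax_right by lra. intros x Hx.
  destruct (Hfg x ltac:(lra)) as [E1 E2]. unfold energy. now rewrite E1, E2.
Qed.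

Lemma RInt_energy_nonneg M k l (f : R -> R) : 0 < M -> 0 < k -> admissible M k f ->
  0 <= RInt (energy l f) (rstar3M M k) (PI / 2).
Proof.
  intros HM Hk [Hf _]. pose proof (rstar3M_lt_PI2 M k HM Hk).
  apply RInt_ge_0; [lra | | intros; apply energy_nonneg].
  apply (ex_RInt_continuous (V := R_CompleteNormedModule)).
  rewrite Rmin_left, Rmax_right by lra. intros x Hx. destruct (Hf x Hx) as [Hd HDf].
  assert (Hfx := ex_derive_continuous (V := R_NormedModule) f x Hd).
  unfold energy. apply continuous_Rplus; [now apply continuous_Rsqr|].
  apply continuous_Rmult; [apply continuous_const | now apply continuous_Rsqr].
Qed.

Lemma agmon_estimate M k l (f : R -> R) mu r0 x1 c K :
  0 < M -> 0 < k -> (2 <= l)%nat -> is_QM_minimiser M k l f -> 0 <= mu ->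
  rstar3M M k <= r0 <= x1 -> x1 <= PI / 2 -> 0 < c <= 1 / 2 -> 0 <= K ->
  (forall x, rstar3M M k <= x <= x1 ->
     c * Lam l + 2 * mu ^ 2 <= V_u M k l x - quotQ M k l f) ->
  quotQ M k l f + 2 * mu ^ 2 <= K * Lam l ->
  RInt (energy l f) (rstar3M M k) r0
  <= (1 + w_max M k + K) / c * exp (- (2 * mu * (x1 - r0)))
     * RInt (energy l f) (rstar3M M k) (PI / 2).
Proof.
  intros HM Hk Hl Hmin Hmu Hr0 Hx1 Hc HK Hgap Htail.
  destruct (minimiser_C1_extension M k HM Hk l f Hmin) as [g [Hg [Hgf Hming]]].
  pose proof (rstar3M_lt_PI2 M k HM Hk).
  rewrite (quotQ_ext M k HM Hk l f g) in Hgap, Htail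
    by (intros x Hx; destruct (Hgf x Hx); split; congruence).
  rewrite !(RInt_energy_ext l f g)
    by (lra || intros x Hx; destruct (Hgf x ltac:(lra)); split; congruence).
  now apply agmon_estimate_C1.
Qed.

Lemma sq_scaled_le_Lam m l : 0 <= m <= 1 / 2 -> (2 <= l)%nat -> 2 * (m * INR l) ^ 2 <= m * Lam l.
Proof.
  intros Hm Hl. destruct (Lam_bounds l Hl) as [_ [_ HL]].
  replace (2 * (m * INR l) ^ 2) with ((2 * m) * (m * INR l ^ 2)) by ring.
  assert (0 <= m * INR l ^ 2) by (apply Rmult_le_pos; [lra | apply pow2_ge_0]).
  apply (Rle_trans _ (1 * (m * INR l ^ 2))); [apply Rmult_le_compat_r; lra|].
  rewrite Rmult_1_l. apply Rmult_le_compat_l; lra.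
Qed.

(* [w] is strictly larger on [[r*_3M, x1]] than at [p], beyond which the trial function
   of [quotQ_upper] lives. *)
Lemma potential_gap M k x1 : 0 < M -> 0 < k -> rstar3M M k < x1 < PI / 2 ->
  exists c m K l0, 0 < c <= 1 / 2 /\ 0 < m /\ 0 <= K /\
  forall l (f : R -> R), (l0 <= l)%nat -> (2 <= l)%nat -> is_QM_minimiser M k l f ->
    (forall x, rstar3M M k <= x <= x1 ->
       c * Lam l + 2 * (m * INR l) ^ 2 <= V_u M k l x - quotQ M k l f)
    /\ quotQ M k l f + 2 * (m * INR l) ^ 2 <= K * Lam l.
Proof.
  intros HM Hk Hx1. set (p := (x1 + PI / 2) / 2).
  destruct (quotQ_upper M k HM Hk p ltac:(unfold p; lra)) as [Cq [HCq Hupper]].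
  destruct (u_of_spec M k HM Hk x1 ltac:(lra)) as [Hu1 _].
  destruct (u_of_spec M k HM Hk p ltac:(unfold p; lra)) as [Hup _].
  pose proof (u_of_lt M k HM Hk x1 p ltac:(lra) ltac:(unfold p; lra) ltac:(unfold p; lra)) as Hlt.
  set (gap := w_u M k (u_of M k x1) - w_u M k (u_of M k p)).
  assert (Hgap : 0 < gap).
  { pose proof (w_u_lt M k HM (u_of M k p) (u_of M k x1) ltac:(lra) Hlt ltac:(lra)).
    unfold gap. lra. }
  pose proof (w_u_bounds M k HM _ Hu1). pose proof (w_u_bounds M k HM _ Hup).
  pose proof (k2_pos k Hk).
  set (c := Rmin (1 / 2) (gap / 4)). set (m := Rmin (1 / 2) (gap / 8)).
  assert (Hc : 0 < c <= 1 / 2 /\ c <= gap / 4)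
    by (unfold c; repeat split; [apply Rmin_glb_lt; lra | apply Rmin_l | apply Rmin_r]).
  assert (Hm : 0 < m <= 1 / 2 /\ m <= gap / 8)
    by (unfold m; repeat split; [apply Rmin_glb_lt; lra | apply Rmin_l | apply Rmin_r]).
  destruct (INR_unbounded (2 * (2 * w_max M k + Cq) / gap)) as [l0 Hl0].
  exists c, m, (w_max M k + Cq + 1), l0. split; [lra|]. split; [lra|]. split; [lra|].
  intros l f Hll0 Hl Hmin. pose proof (Hupper l f Hl Hmin) as Hq.
  destruct (Lam_bounds l Hl) as [HL [HLl _]].
  assert (Hlarge : 2 * (2 * w_max M k + Cq) < Lam l * gap).
  { apply le_INR in Hll0. apply (Rmult_lt_reg_r (/ gap)); [now apply Rinv_0_lt_compat|].
    replace (Lam l * gap * / gap) with (Lam l) by (field; lra). unfold Rdiv in Hl0. lra. }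
  pose proof (sq_scaled_le_Lam m l ltac:(lra) Hl) as Hmu.
  assert (m * Lam l <= gap / 8 * Lam l) by (apply Rmult_le_compat_r; lra).
  split.
  - intros x Hx. pose proof (V_u_ge M k HM Hk l x Hl ltac:(lra)) as HVx.
    destruct (u_of_spec M k HM Hk x ltac:(lra)) as [Hux _].
    pose proof (u_of_le M k HM Hk x x1 ltac:(lra) ltac:(lra) ltac:(lra)) as Hle.
    pose proof (w_u_le M k HM (u_of M k x1) (u_of M k x) ltac:(lra) Hle ltac:(lra)).
    assert (c * Lam l <= gap / 4 * Lam l) by (apply Rmult_le_compat_r; lra).
    unfold gap in *. nra.
  - assert (m * Lam l <= 1 / 2 * Lam l) by (apply Rmult_le_compat_r; lra).
    assert (Lam l * w_u M k (u_of M k p) <= Lam l * w_max M k) by (apply Rmult_le_compat_l; lra).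
    nra.
Qed.

Lemma energy_exp_decay M k r0 : 0 < M -> 0 < k -> rstar3M M k < r0 < PI / 2 ->
  exists A delta l0, 0 < A /\ 0 < delta /\
  forall l (f : R -> R), (l0 <= l)%nat -> (2 <= l)%nat -> is_QM_minimiser M k l f ->
    RInt (energy l f) (rstar3M M k) r0
    <= A * exp (- delta * INR l) * RInt (energy l f) (rstar3M M k) (PI / 2).
Proof.
  intros HM Hk Hr0. set (x1 := (r0 + PI / 2) / 2).
  destruct (potential_gap M k x1 HM Hk ltac:(unfold x1; lra))
    as [c [m [K [l0 [Hc [Hm [HK Hgap]]]]]]].
  exists ((1 + w_max M k + K) / c), (2 * m * (x1 - r0)), l0.
  pose proof (w_max_pos M k Hk).
  split; [apply Rdiv_lt_0_compat; lra|]. split; [apply Rmult_lt_0_compat; unfold x1; lra|].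
  intros l f Hll0 Hl Hmin. destruct (Hgap l f Hll0 Hl Hmin) as [Hleft Htail].
  replace (- (2 * m * (x1 - r0)) * INR l) with (- (2 * (m * INR l) * (x1 - r0))) by ring.
  apply (agmon_estimate M k l f (m * INR l) r0 x1 c K); auto; try (unfold x1; lra).
  apply Rmult_le_pos; [lra | apply pos_INR].
Qed.

Lemma exp_decay_rescale A delta : 0 < A -> 0 < delta ->
  exists C, 0 < C /\ forall t, 0 <= t -> A * exp (- delta * t) <= C * exp (- t / C).
Proof.
  intros HA Hdelta. exists (Rmax A (/ delta)).
  assert (HAC : A <= Rmax A (/ delta)) by apply Rmax_l.
  assert (HC : / Rmax A (/ delta) <= delta).
  { rewrite <- (Rinv_inv delta) at 2.
    apply Rinv_le_contravar; [now apply Rinv_0_lt_compat | apply Rmax_r]. }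
  split; [lra|]. intros t Ht.
  apply Rmult_le_compat; [lra | left; apply exp_pos | exact HAC|].
  apply exp_le_compat. unfold Rdiv. nra.
Qed.

Theorem lemma4p13 (M k r0 : R) :
  0 < M -> 0 < k -> rstar3M M k < r0 < PI / 2 ->
  exists C : R, 0 < C /\
  exists l0 : nat, forall l : nat, (l0 <= l)%nat -> (2 <= l)%nat ->
  forall RQM : R -> R, is_QM_minimiser M k l RQM ->
    RInt (energy l RQM) (rstar3M M k) r0
    <= C * exp (- (INR l) / C) * RInt (energy l RQM) (rstar3M M k) (PI / 2).
Proof.
  intros HM Hk Hr0.
  destruct (energy_exp_decay M k r0 HM Hk Hr0) as [A [delta [l0 [HA [Hdelta Hdecay]]]]].
  destruct (exp_decay_rescale A delta HA Hdelta) as [C [HC Hrescale]].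
  exists C. split; [exact HC|]. exists l0. intros l Hll0 Hl RQM Hmin.
  apply (Rle_trans _ _ _ (Hdecay l RQM Hll0 Hl Hmin)).
  apply Rmult_le_compat_r; [now apply RInt_energy_nonneg, Hmin|].
  apply Hrescale, pos_INR.
Qed.
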